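(* Let $G$ be a connected graph of girth $s$ and let $k\ge 2$. Suppose $G$ has $k$ level-disjoint partitions $\mathcal{S}^1,\dots,\mathcal{S}^k$ rooted in a vertex $v$ of optimal height, i.e. $\max_i h(\mathcal{S}^i)=\mathrm{ecc}(v)+k-1$ if $G$ is non-bipartite and $\max_i h(\mathcal{S}^i)=\mathrm{ecc}(v)+2k-2$ if $G$ is bipartite. Then $\mathrm{ecc}(v)\ge s-2$ if $G$ is non-bipartite, and $\mathrm{ecc}(v)\ge s-3$ if $G$ is bipartite.
   Context: For $S\subseteq V(G)$, $N(S)$ is the set of vertices adjacent to some vertex of $S$. A level partition of $G$ is a tuple $\mathcal{S}=(S_0,\dots,S_h)$ of pairwise disjoint sets with union $V(G)$ such that $S_i\subseteq N(S_{i-1})$ for $1\le i\le h$; $h(\mathcal{S})=h$ is its height; it is rooted in $v$ if $S_0=\{v\}$. Level partitions are level-disjoint if for every two of them $\mathcal{S},\mathcal{T}$, $S_i\cap T_i=\emptyset$ for every $1\le i\le\min(h(\mathcal{S}),h(\mathcal{T}))$. The girth is the length of a shortest cycle; $\mathrm{ecc}(v)=\max_{u} d(u,v)$. *)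

From mathcomp Require Import all_boot.
Set Implicit Arguments. Unset Strict Implicit. Unset Printing Implicit Defensive.

Section Graphs.
Variable T : finType.
Variable e : rel T.

Definition simple_graph : Prop := symmetric e /\ irreflexive e.

Definition connected : Prop := forall u w : T, connect e u w.

Definition bipartite : Prop := exists f : T -> bool, forall x y, e x y -> f x != f y.

Definition is_cycle_of_length (c : seq T) (l : nat) : Prop :=
  [/\ cycle e c, uniq c, size c = l & 3 <= l].

Definition girth (s : nat) : Prop :=
  (exists c, is_cycle_of_length c s) /\
  (forall c l, is_cycle_of_length c l -> s <= l).

Definition walk_len (u w : T) (n : nat) : Prop :=
  exists p : seq T, [/\ path e u p, last u p = w & size p = n].

Definition is_dist (u w : T) (d : nat) : Prop :=
  walk_len u w d /\ forall n, walk_len u w n -> d <= n.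

Definition is_ecc (v : T) (m : nat) : Prop :=
  (exists u, is_dist v u m) /\ forall u d, is_dist v u d -> d <= m.

Definition nbhd (S : {set T}) : {set T} := [set y | [exists x in S, e x y]].

Definition height (P : seq {set T}) : nat := (size P).-1.

Definition level_partition (P : seq {set T}) : Prop :=
  [/\ 0 < size P,
      (forall i j, i < size P -> j < size P -> i != j ->
         [disjoint nth set0 P i & nth set0 P j]),
      (forall x : T, exists2 i, i < size P & x \in nth set0 P i) &
      (forall i, 1 <= i <= height P -> nth set0 P i \subset nbhd (nth set0 P i.-1))].

Definition rooted_in (P : seq {set T}) (v : T) : Prop := nth set0 P 0 = [set v].

Definition level_disjoint (k : nat) (Ps : 'I_k -> seq {set T}) : Prop :=
  forall a b : 'I_k, a != b ->
    forall i, 1 <= i <= minn (height (Ps a)) (height (Ps b)) ->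
      nth set0 (Ps a) i :&: nth set0 (Ps b) i = set0.

Definition max_height (k : nat) (Ps : 'I_k -> seq {set T}) : nat :=
  \max_(a < k) height (Ps a).

End Graphs.

From mathcomp Require Import all_boot.
From mathcomp Require Import zify.

Set Implicit Arguments.
Unset Strict Implicit.
Unset Printing Implicit Defensive.

(* Let [w] be a neighbour of the root [v]. In each partition [w] sits at some
   level [l >= 1], and level-disjointness makes these [k] levels pairwise
   distinct. If [l >= 2], walking down the levels from [w] to [v] and closing
   with the edge [wv] gives a cycle of length [l + 1], so [l + 1 >= s]. Hence
   the [k] levels lie in [{1} ∪ [s - 1, h]] with [h] the maximal height, and
   for bipartite graphs they are moreover odd; counting gives the bounds. *)

Lemma inj_card_le_size (I : finType) (U : eqType) (f : I -> U) (r : seq U) :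
  injective f -> (forall i, f i \in r) -> #|I| <= size r.
Proof.
move=> f_inj f_r; rewrite cardE -(size_map f).
apply: uniq_leq_size => [|_ /mapP[i _ ->] //].
by rewrite map_inj_uniq ?enum_uniq.
Qed.

Lemma inj_level_count k M s (L : 'I_k -> nat) :
  injective L -> (forall a, L a = 1 \/ s - 1 <= L a <= M) ->
  k <= (M + 2 - s).+1.
Proof.
move=> L_inj L_range.
have := @inj_card_le_size _ _ _ (1 :: iota (s - 1) (M + 2 - s)) L_inj.
rewrite card_ord /= size_iota; apply=> a; rewrite inE mem_iota.
by case: (L_range a) => [->|]; rewrite ?eqxx //; lia.
Qed.

(* Odd levels are told apart by their halves. *)
Lemma inj_odd_level_count k M s (L : 'I_k -> nat) :
  injective L -> (forall a, odd (L a)) ->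
  (forall a, L a = 1 \/ s - 1 <= L a <= M) ->
  k <= ((M - 1)./2 + 1 - (s - 1)./2).+1.
Proof.
move=> L_inj L_odd L_range.
have L_half a : L a = ((L a)./2).*2.+1.
  by rewrite -[LHS]odd_double_half L_odd.
have half_inj : injective (fun a => (L a)./2).
  by move=> a b /= eq_half; apply: L_inj; rewrite L_half eq_half -L_half.
have := @inj_card_le_size _ _ _
  (0 :: iota ((s - 1)./2) ((M - 1)./2 + 1 - (s - 1)./2)) half_inj.
rewrite card_ord /= size_iota; apply=> a; rewrite inE mem_iota.
have := L_half a; rewrite -!divn2 -!mul2n.
by case: (L_range a) => [->|]; rewrite ?eqxx //; lia.
Qed.

Lemma walk_parity (T : finType) (e : rel T) (f : T -> bool) :
  (forall x y, e x y -> f x != f y) ->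
  forall u p, path e u p -> f (last u p) = f u (+) odd (size p).
Proof.
move=> f_col u p; elim: p u => [|y p IHp] u /=; first by rewrite addbF.
case/andP=> /f_col f_uy /IHp ->.
by move: f_uy; case: (f u); case: (f y); case: odd.
Qed.

Lemma cycle_other_vertex (T : finType) (e : rel T) (c : seq T) l (v : T) :
  is_cycle_of_length e c l -> exists u, u != v.
Proof.
case: c => [|x [|y c]] [_ c_uniq <- _] //.
move: c_uniq; rewrite /= inE negb_or => /andP[/andP[xy _] _].
by case: (eqVneq x v) => [xv|]; [exists y; rewrite -xv eq_sym | exists x].
Qed.

Lemma connected_neighbour (T : finType) (e : rel T) (u v : T) :
  connected e -> u != v -> exists w, e v w.
Proof.
move=> conn uv; have /connectP[[|w p] /= p_path p_last] := conn v u.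
  by rewrite p_last eqxx in uv.
by case/andP: p_path => vw _; exists w.
Qed.

Section Levels.
Variables (T : finType) (e : rel T) (P : seq {set T}) (v : T).
Hypotheses (P_part : level_partition e P) (P_root : rooted_in P v).

Definition level_of (x : T) : nat := find (fun S : {set T} => x \in S) P.

Lemma level_of_lt_size x : level_of x < size P.
Proof.
case: P_part => _ _ P_cover _; have [i i_lt x_i] := P_cover x.
by rewrite /level_of -has_find; apply/hasP; exists (nth set0 P i); rewrite ?mem_nth.
Qed.

Lemma mem_level_of x : x \in nth set0 P (level_of x).
Proof.
by apply: (nth_find set0 (a := fun S : {set T} => x \in S)); rewrite has_find level_of_lt_size.
Qed.

Lemma level_path l x : l < size P -> x \in nth set0 P l ->
  exists p, [/\ path e v p, last v p = x, size p = l &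
                forall i, i <= l -> nth v (v :: p) i \in nth set0 P i].
Proof.
case: P_part => _ _ _ P_sub; elim: l x => [|l IHl] x l_lt x_l.
  move: x_l; rewrite P_root => /set1P ->; exists [::]; split=> // i.
  by rewrite leqn0 => /eqP ->; rewrite P_root set11.
have : x \in nbhd e (nth set0 P l) by apply: (subsetP (P_sub l.+1 _)); rewrite /height; lia.
rewrite inE => /existsP[y /andP[y_l yx]].
have [p [p_path p_last p_size p_lev]] := IHl y (ltnW l_lt) y_l.
exists (rcons p x); split; rewrite ?last_rcons ?size_rcons ?p_size //.
  by rewrite rcons_path p_path p_last.
move=> i i_le; rewrite -rcons_cons nth_rcons /= p_size ltnS.
case: leqP => [|l_lt_i]; first exact: p_lev.
have -> : i = l.+1 by lia.
by rewrite eqxx.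
Qed.

(* The vertices of a level path lie in distinct, hence disjoint, levels. *)
Lemma level_path_uniq l x : l < size P -> x \in nth set0 P l ->
  exists p, [/\ path e v p, last v p = x, size p = l & uniq (v :: p)].
Proof.
move=> l_lt x_l; have [p [p_path p_last p_size p_lev]] := level_path l_lt x_l.
exists p; split=> //; apply/(uniqP v) => i j; rewrite !inE /= p_size => i_le j_le pij.
apply/eqP/negPn/negP => ij; case: P_part => _ P_disj _ _.
have := disjointFr (P_disj i j (leq_trans i_le l_lt) (leq_trans j_le l_lt) ij)
  (p_lev i i_le).
by rewrite pij p_lev.
Qed.

Lemma level_of_neighbour_gt0 w : irreflexive e -> e v w -> 0 < level_of w.
Proof.
move=> e_irr vw; rewrite lt0n; apply/eqP => w_lev0.
by have := mem_level_of w; rewrite w_lev0 P_root => /set1P wv; rewrite wv e_irr in vw.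
Qed.

Lemma level_of_neighbour_cycle w : symmetric e -> e v w -> 2 <= level_of w ->
  exists c, is_cycle_of_length e c (level_of w).+1.
Proof.
move=> e_sym vw w_lev.
have [p [p_path p_last p_size p_uniq]] :=
  level_path_uniq (level_of_lt_size w) (mem_level_of w).
exists (v :: p); split; rewrite /= ?p_size //.
by rewrite rcons_path p_path p_last e_sym.
Qed.

Lemma level_of_neighbour_odd (f : T -> bool) w :
  (forall x y, e x y -> f x != f y) -> e v w -> odd (level_of w).
Proof.
move=> f_col vw.
have [p [p_path p_last p_size _]] := level_path (level_of_lt_size w) (mem_level_of w).
have := walk_parity f_col p_path; rewrite p_last p_size => fw.
by have := f_col _ _ vw; rewrite fw; case: (f v); case: odd.
Qed.

End Levels.

Lemma level_of_le_max_height (T : finType) (e : rel T) k (Ps : 'I_k -> seq {set T})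
    (a : 'I_k) (w : T) :
  level_partition e (Ps a) -> level_of (Ps a) w <= max_height Ps.
Proof.
move=> Pa_part; apply: leq_trans (leq_bigmax (F := fun b => height (Ps b)) a).
by have := level_of_lt_size Pa_part w; rewrite /height; lia.
Qed.

Lemma level_of_injective (T : finType) (e : rel T) k (Ps : 'I_k -> seq {set T}) (w : T) :
  (forall a, level_partition e (Ps a)) -> level_disjoint Ps ->
  (forall a, 0 < level_of (Ps a) w) -> injective (fun a => level_of (Ps a) w).
Proof.
move=> Ps_part Ps_disj lev_gt0 a b /= lev_ab; apply/eqP/negPn/negP => ab.
have lt_a := level_of_lt_size (Ps_part a) w.
have lt_b := level_of_lt_size (Ps_part b) w.
have gt0_a := lev_gt0 a.
have /setP/(_ w) := Ps_disj a b ab (level_of (Ps a) w) ltac:(rewrite /height; lia).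
by rewrite inE {2}lev_ab (mem_level_of (Ps_part a)) (mem_level_of (Ps_part b)) inE.
Qed.

Theorem proposition7 (T : finType) (e : rel T) (s k : nat) (v : T) (m : nat)
    (Ps : 'I_k -> seq {set T}) :
  simple_graph e -> connected e -> girth e s -> 2 <= k ->
  (forall a, level_partition e (Ps a)) ->
  (forall a, rooted_in (Ps a) v) ->
  level_disjoint Ps ->
  is_ecc e v m ->
  (~ bipartite e -> max_height Ps = m + k - 1 -> s - 2 <= m) /\
  (bipartite e -> max_height Ps = m + 2 * k - 2 -> s - 3 <= m).
Proof.
move=> [e_sym e_irr] conn [[c c_cyc] s_min] k_ge2 Ps_part Ps_root Ps_disj _.
have [u uv] := cycle_other_vertex v c_cyc.
have [w vw] := connected_neighbour conn uv.
pose L a := level_of (Ps a) w.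
have L_gt0 a : 0 < L a := level_of_neighbour_gt0 (Ps_part a) (Ps_root a) e_irr vw.
have L_inj : injective L := level_of_injective Ps_part Ps_disj L_gt0.
have L_range a : L a = 1 \/ s - 1 <= L a <= max_height Ps.
  have L_le : L a <= max_height Ps := level_of_le_max_height w (Ps_part a).
  have [L_lt2|L_ge2] := ltnP (L a) 2; first by have := L_gt0 a; left; lia.
  have [c' /s_min s_le] := level_of_neighbour_cycle (Ps_part a) (Ps_root a) e_sym vw L_ge2.
  by rewrite -/(L a) in s_le; right; lia.
split=> [_ hmax | [f f_col] hmax].
  by have := inj_level_count L_inj L_range; rewrite hmax; lia.
have L_odd a : odd (L a) := level_of_neighbour_odd (Ps_part a) (Ps_root a) f_col vw.
by have := inj_odd_level_count L_inj L_odd L_range; rewrite hmax -!divn2; lia.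
Qed.
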